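(* There exists $K_0<\infty$ such that for every $K\in[K_0,\infty)$, every minimizer of $\mathcal{L}_K$ on $M_K$ is a non-constant function.
   Context: Fix $p>2$, $1<q<p$, $\sigma^2>0$. For $K\in(0,\infty)$, $I_K=(-K,K]$ and functions on $I_K$ are identified with $2K$-periodic functions on $\mathbb{R}$; $\|\cdot\|_{r,I_K}$ is the $L^r$ norm over $I_K$. $(\mathcal{A}W)(\varphi)=\int_{\varphi-1/2}^{\varphi+1/2}W(s)\,ds$. $X_K=\{W\in L^2(I_K):\mathcal{A}W\in L^q(I_K)\cap L^p(I_K)\}$, $\mathcal{Q}_K(W)=\int_{I_K}|\mathcal{A}W|^q$, $\mathcal{P}_K(W)=\int_{I_K}|\mathcal{A}W|^p$, $\mathcal{L}_K(W)=\tfrac12\sigma^2\|W\|_{2,I_K}^2+\mathcal{Q}_K(W)-\mathcal{P}_K(W)$, $\mathcal{F}_K(W)=\sigma^2\|W\|_{2,I_K}^2+q\mathcal{Q}_K(W)-p\mathcal{P}_K(W)$, $M_K=\{W\in X_K:W\ne0,\ \mathcal{F}_K(W)=0\}$. *)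

From Stdlib Require Import Reals Lra Classical ClassicalEpsilon.
Open Scope R_scope.

(* RI f a b = Riemann integral of f over [a,b] when f is Riemann integrable
   there, and 0 otherwise (only used on integrable functions). *)
Definition RI (f : R -> R) (a b : R) : R :=
  match excluded_middle_informative
          (exists v : R, exists pr : Riemann_integrable f a b, RiemannInt pr = v) with
  | left H => proj1_sig (constructive_indefinite_description _ H)
  | right _ => 0
  end.

(* Rlim s = limit of the real sequence s if it converges, 0 otherwise. *)
Definition Rlim (s : nat -> R) : R :=
  match excluded_middle_informative (exists l : R, Un_cv s l) with
  | left H => proj1_sig (constructive_indefinite_description _ H)
  | right _ => 0
  end.

(* |x|^r, with the convention |0|^r = 0 (r > 0 here). *)
Definition powabs (x r : R) : R :=
  if Req_EM_T x 0 then 0 else Rpower (Rabs x) r.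

(* continuous 2K-periodic functions on R  (= continuous functions on the circle I_K) *)
Definition Cper (K : R) (f : R -> R) : Prop :=
  continuity f /\ forall x, f (x + 2 * K) = f x.

Definition dist2 (K : R) (f g : R -> R) : R :=
  RI (fun x => (f x - g x) ^ 2) (- K) K.

(* An element W of L^2(I_K) is represented by an L^2-Cauchy sequence of
   continuous 2K-periodic functions (standard completion construction). *)
Definition L2seq (K : R) (u : nat -> R -> R) : Prop :=
  (forall n, Cper K (u n)) /\
  (forall eps, eps > 0 -> exists N : nat,
     forall n m, (n >= N)%nat -> (m >= N)%nat -> dist2 K (u n) (u m) < eps).

Definition L2eq (K : R) (u v : nat -> R -> R) : Prop :=
  Un_cv (fun n => dist2 K (u n) (v n)) 0.

Definition cst_seq (c : R) : nat -> R -> R := fun _ _ => c.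

Definition norm2sq (K : R) (u : nat -> R -> R) : R :=
  Rlim (fun n => RI (fun x => (u n x) ^ 2) (- K) K).

Definition AW (u : nat -> R -> R) (phi : R) : R :=
  Rlim (fun n => RI (u n) (phi - 1 / 2) (phi + 1 / 2)).

Definition Intpow (K r : R) (u : nat -> R -> R) : R :=
  RI (fun phi => powabs (AW u phi) r) (- K) K.

Definition QK (K q : R) u := Intpow K q u.
Definition PK (K p : R) u := Intpow K p u.

Definition LK (K p q sigma : R) u : R :=
  1 / 2 * sigma ^ 2 * norm2sq K u + QK K q u - PK K p u.

Definition FK (K p q sigma : R) u : R :=
  sigma ^ 2 * norm2sq K u + q * QK K q u - p * PK K p u.

Definition XK (K p q : R) (u : nat -> R -> R) : Prop :=
  L2seq K u /\
  inhabited (Riemann_integrable (fun phi => powabs (AW u phi) q) (- K) K) /\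
  inhabited (Riemann_integrable (fun phi => powabs (AW u phi) p) (- K) K).

Definition MK (K p q sigma : R) (u : nat -> R -> R) : Prop :=
  XK K p q u /\ ~ L2eq K u (cst_seq 0) /\ FK K p q sigma u = 0.

Definition minimizer (K p q sigma : R) (u : nat -> R -> R) : Prop :=
  MK K p q sigma u /\
  forall v, MK K p q sigma v -> LK K p q sigma u <= LK K p q sigma v.

Definition is_constant (K : R) (u : nat -> R -> R) : Prop :=
  exists c : R, L2eq K u (cst_seq c).

(* A constant class c lies on the Nehari manifold M_K only if s c^2 + q |c|^q = p |c|^p
   (s = sigma^2), which forces |c|^(p-2) >= s/p; its energy is then
   2K ((1/2 - 1/p) s c^2 + (1 - q/p) |c|^q) >= 2K alpha with alpha > 0 independent of K.
   On the other hand, for K >= 3 the 2K-periodic tent t * tent(x) has L^2 norm and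
   integrals of |A W|^r that do not depend on K, and a suitable t puts it on M_K with an
   energy L0 independent of K.  Hence no constant minimizes L_K on M_K once 2K alpha > L0. *)

From Stdlib Require Import Reals Ranalysis5 Lra ClassicalEpsilon FunctionalExtensionality.
From Coquelicot Require Import Coquelicot.
Open Scope R_scope.

Lemma RI_RiemannInt f a b (pr : Riemann_integrable f a b) : RI f a b = RiemannInt pr.
Proof.
  unfold RI. destruct excluded_middle_informative as [H|H].
  - destruct (constructive_indefinite_description _ H) as [v [pr' <-]]; simpl.
    apply RiemannInt_P5.
  - exfalso. apply H. exists (RiemannInt pr), pr. reflexivity.
Qed.

Lemma RI_RInt f a b : ex_RInt f a b -> RI f a b = RInt f a b.
Proof.
  intros H. rewrite (RI_RiemannInt _ _ _ (ex_RInt_Reals_0 f a b H)).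
  symmetry. apply RInt_Reals.
Qed.

Lemma Rlim_Un_cv s l : Un_cv s l -> Rlim s = l.
Proof.
  intros H. unfold Rlim. destruct excluded_middle_informative as [H'|H'].
  - destruct (constructive_indefinite_description _ H') as [l' Hl']; simpl.
    exact (UL_sequence s l' l Hl' H).
  - exfalso. apply H'. exists l. exact H.
Qed.

Lemma Un_cv_const c : Un_cv (fun _ => c) c.
Proof. intros e He. exists 0%nat. intros. unfold Rdist. rewrite Rminus_eq_0, Rabs_R0. lra. Qed.

Lemma Rlim_const c : Rlim (fun _ => c) = c.
Proof. apply Rlim_Un_cv, Un_cv_const. Qed.

Lemma Un_cv_0_squeeze x y : (forall n, 0 <= x n <= y n) -> Un_cv y 0 -> Un_cv x 0.
Proof.
  intros Hxy Hy. apply is_lim_seq_Reals.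
  apply (is_lim_seq_le_le (fun _ => 0) x y); [exact Hxy | apply is_lim_seq_const |].
  apply is_lim_seq_Reals, Hy.
Qed.

Lemma continuity_sq f : continuity f -> continuity (fun y => f y ^ 2).
Proof.
  intros Hf. change (continuity (fun y => f y * (f y * 1))).
  apply continuity_mult; [exact Hf |]. apply continuity_mult; [exact Hf |].
  apply continuity_const. intros ? ?. reflexivity.
Qed.

Ltac solve_continuity := repeat first
  [ assumption
  | apply continuity_plus | apply continuity_minus | apply continuity_mult
  | apply continuity_opp | apply continuity_sq
  | apply continuity_const; intros ? ?; reflexivity
  | apply (derivable_continuous _ derivable_id) ].

Lemma ex_RInt_continuity f a b : continuity f -> ex_RInt f a b.
Proof.
  intros Hf. apply (ex_RInt_continuous (V := R_CompleteNormedModule)). intros z _.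
  apply continuity_pt_filterlim, Hf.
Qed.

Lemma RI_continuity f a b : continuity f -> RI f a b = RInt f a b.
Proof. intros Hf. apply RI_RInt, ex_RInt_continuity, Hf. Qed.

(* Coquelicot's generic [plus]/[scal] do not match [Rplus]/[Rmult] when rewriting. *)

Lemma RInt_Rplus (f g : R -> R) (a b : R) : ex_RInt f a b -> ex_RInt g a b ->
  RInt (fun x => f x + g x) a b = RInt f a b + RInt g a b.
Proof. intros Hf Hg. exact (RInt_plus f g a b Hf Hg). Qed.

Lemma RInt_Rminus (f g : R -> R) (a b : R) : ex_RInt f a b -> ex_RInt g a b ->
  RInt (fun x => f x - g x) a b = RInt f a b - RInt g a b.
Proof. intros Hf Hg. exact (RInt_minus f g a b Hf Hg). Qed.

Lemma RInt_Rmult_l (f : R -> R) (k a b : R) : ex_RInt f a b ->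
  RInt (fun x => k * f x) a b = k * RInt f a b.
Proof. intros Hf. exact (RInt_scal f a b k Hf). Qed.

Lemma RInt_Rconst (c a b : R) : RInt (fun _ => c) a b = c * (b - a).
Proof. rewrite RInt_const. apply Rmult_comm. Qed.

Lemma RInt_Chasles_R (f : R -> R) (a b c : R) : continuity f ->
  RInt f a b + RInt f b c = RInt f a c.
Proof.
  intros Hf.
  exact (RInt_Chasles f a b c (ex_RInt_continuity f a b Hf) (ex_RInt_continuity f b c Hf)).
Qed.

Lemma RInt_ext_R (f g : R -> R) (a b : R) : (forall x, f x = g x) ->
  RInt f a b = RInt g a b.
Proof. intros H. apply RInt_ext. intros x _. exact (H x). Qed.

Lemma RInt_ext_le (f g : R -> R) (a b : R) : a <= b -> (forall x, a < x < b -> f x = g x) ->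
  RInt f a b = RInt g a b.
Proof. intros Hab H. apply RInt_ext. rewrite Rmin_left, Rmax_right by exact Hab. exact H. Qed.

Lemma RInt_eq_0 (f : R -> R) (a b : R) : a <= b -> (forall x, a < x < b -> f x = 0) ->
  RInt f a b = 0.
Proof.
  intros Hab H. rewrite (RInt_ext_le f (fun _ => 0) a b Hab H), RInt_Rconst. apply Rmult_0_l.
Qed.

Lemma RInt_nonneg (f : R -> R) (a b : R) : a <= b -> continuity f -> (forall x, 0 <= f x) ->
  0 <= RInt f a b.
Proof. intros Hab Hf Hpos. apply RInt_ge_0; auto. apply ex_RInt_continuity, Hf. Qed.

Lemma RInt_le_R (f g : R -> R) (a b : R) : a <= b -> continuity f -> continuity g ->
  (forall x, f x <= g x) -> RInt f a b <= RInt g a b.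
Proof. intros Hab Hf Hg Hfg. apply RInt_le; auto; apply ex_RInt_continuity; assumption. Qed.

Lemma RInt_subinterval_le (f : R -> R) (a c d b : R) : a <= c -> c <= d -> d <= b ->
  continuity f -> (forall x, 0 <= f x) -> RInt f c d <= RInt f a b.
Proof.
  intros Hac Hcd Hdb Hf Hpos.
  rewrite <- (RInt_Chasles_R f a c b Hf), <- (RInt_Chasles_R f c d b Hf).
  pose proof (RInt_nonneg f a c Hac Hf Hpos). pose proof (RInt_nonneg f d b Hdb Hf Hpos). lra.
Qed.

Lemma RInt_symmetric_support (f : R -> R) (K b : R) : 0 < b <= K -> continuity f ->
  (forall x, b <= Rabs x -> f x = 0) -> RInt f (- K) K = RInt f (- b) b.
Proof.
  intros Hb Hf H0.
  rewrite <- (RInt_Chasles_R f (- K) (- b) K Hf), <- (RInt_Chasles_R f (- b) b K Hf).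
  rewrite (RInt_eq_0 f (- K) (- b)), (RInt_eq_0 f b K); try lra.
  - intros x Hx. apply H0. rewrite Rabs_right; lra.
  - intros x Hx. apply H0. rewrite Rabs_left; lra.
Qed.

Lemma RInt_translate (f : R -> R) (a b v : R) : continuity f ->
  RInt (fun y => f (y + v)) a b = RInt f (a + v) (b + v).
Proof.
  intros Hf.
  rewrite (RInt_ext (fun y => f (y + v)) (fun y => scal 1 (f (1 * y + v)))).
  2:{ intros x _. rewrite !Rmult_1_l. reflexivity. }
  rewrite (RInt_comp_lin (V := R_CompleteNormedModule)) by apply ex_RInt_continuity, Hf.
  f_equal; ring.
Qed.

(* A window of length 1 inside [-2K, 2K] is covered by three periods. *)
Lemma RInt_window_le_periodic (f : R -> R) (K w : R) : 1/2 <= K -> - K <= w <= K ->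
  continuity f -> (forall x, 0 <= f x) -> (forall x, f (x + 2 * K) = f x) ->
  RInt f (w - 1/2) (w + 1/2) <= 3 * RInt f (- K) K.
Proof.
  intros HK Hw Hf Hpos Hper.
  apply Rle_trans with (RInt f (- (2 * K)) (2 * K)).
  { apply RInt_subinterval_le; auto; lra. }
  rewrite <- (RInt_Chasles_R f (- (2 * K)) (- K) (2 * K) Hf),
          <- (RInt_Chasles_R f (- K) K (2 * K) Hf).
  assert (Hleft : RInt f (- (2 * K)) (- K) = RInt f 0 K).
  { transitivity (RInt (fun y => f (y + - (2 * K))) 0 K).
    - rewrite RInt_translate by exact Hf. f_equal; ring.
    - apply RInt_ext. intros x _. rewrite <- (Hper (x + - (2 * K))). f_equal. ring. }
  assert (Hright : RInt f K (2 * K) = RInt f (- K) 0).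
  { transitivity (RInt (fun y => f (y + 2 * K)) (- K) 0).
    - rewrite RInt_translate by exact Hf. f_equal; ring.
    - apply RInt_ext. intros x _. apply Hper. }
  rewrite Hleft, Hright.
  pose proof (RInt_subinterval_le f (- K) 0 K K ltac:(lra) ltac:(lra) ltac:(lra) Hf Hpos).
  pose proof (RInt_subinterval_le f (- K) (- K) 0 K ltac:(lra) ltac:(lra) ltac:(lra) Hf Hpos).
  lra.
Qed.

Lemma Rabs_le_AM_GM y e : 0 < e -> Rabs y <= / (2 * e) * y ^ 2 + e / 2.
Proof.
  intros He.
  assert (Hsq : / (2 * e) * y ^ 2 + e / 2 - Rabs y = / (2 * e) * (Rabs y - e) ^ 2).
  { rewrite <- (pow2_abs y). field. lra. }
  assert (0 <= / (2 * e) * (Rabs y - e) ^ 2).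
  { apply Rmult_le_pos; [left; apply Rinv_0_lt_compat; lra | apply pow2_ge_0]. }
  lra.
Qed.

Lemma RInt_abs_le_AM_GM (f : R -> R) (a b e : R) : a <= b -> 0 < e -> continuity f ->
  Rabs (RInt f a b) <= / (2 * e) * RInt (fun x => f x ^ 2) a b + e / 2 * (b - a).
Proof.
  intros Hab He Hf.
  apply Rle_trans with (RInt (fun x => Rabs (f x)) a b).
  { apply abs_RInt_le; [exact Hab | apply ex_RInt_continuity, Hf]. }
  rewrite <- RInt_Rmult_l, <- RInt_Rconst, <- RInt_Rplus;
    try apply ex_RInt_continuity; try solve_continuity.
  apply RInt_le_R; [exact Hab | | solve_continuity |].
  - apply (continuity_comp f Rabs Hf Rcontinuity_abs).
  - intros x. apply Rabs_le_AM_GM, He.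
Qed.

Lemma RInt_Un_cv_0_of_sq (f : nat -> R -> R) (a b : R) : a <= b ->
  (forall n, continuity (f n)) ->
  Un_cv (fun n => RInt (fun x => f n x ^ 2) a b) 0 -> Un_cv (fun n => RInt (f n) a b) 0.
Proof.
  intros Hab Hf Hsq eta Heta.
  set (e := eta / (b - a + 1)).
  assert (He : 0 < e) by (apply Rdiv_lt_0_compat; lra).
  destruct (Hsq (eta * e)) as [N HN]; [nra |].
  exists N. intros n Hn. specialize (HN n Hn).
  unfold Rdist in *. rewrite Rminus_0_r in *.
  pose proof (RInt_abs_le_AM_GM (f n) a b e Hab He (Hf n)) as Hbound.
  set (S := RInt (fun x => f n x ^ 2) a b) in *.
  assert (HS : / (2 * e) * S < eta / 2).
  { pose proof (Rle_abs S).
    replace (eta / 2) with (/ (2 * e) * (eta * e)) by (field; lra).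
    apply Rmult_lt_compat_l; [apply Rinv_0_lt_compat |]; lra. }
  assert (Hlen : e / 2 * (b - a) < eta / 2).
  { unfold e. apply Rmult_lt_reg_r with (2 * (b - a + 1)); [lra |].
    replace (eta / (b - a + 1) / 2 * (b - a) * (2 * (b - a + 1))) with (eta * (b - a))
      by (field; lra).
    nra. }
  lra.
Qed.

Section ConstantClass.

Variables (K c : R) (u : nat -> R -> R).
Hypotheses (Hu : L2seq K u) (Huc : L2eq K u (cst_seq c)).

Let u_cont n : continuity (u n) := proj1 (proj1 Hu n).
Let u_per n x : u n (x + 2 * K) = u n x := proj2 (proj1 Hu n) x.

Lemma L2eq_cst_RInt_sq :
  Un_cv (fun n => RInt (fun x => (u n x - c) ^ 2) (- K) K) 0.
Proof.
  eapply Un_cv_ext; [| exact Huc]. intros n.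
  apply RI_continuity. pose proof (u_cont n). solve_continuity.
Qed.

Lemma norm2sq_L2eq_cst : 0 <= K -> norm2sq K u = 2 * K * c ^ 2.
Proof.
  intros HK. unfold norm2sq. apply Rlim_Un_cv.
  set (m := fun n => RInt (fun x => u n x - c) (- K) K).
  assert (Hm : Un_cv m 0).
  { apply (RInt_Un_cv_0_of_sq (fun n x => u n x - c)); [lra | | exact L2eq_cst_RInt_sq].
    intros n. pose proof (u_cont n). solve_continuity. }
  replace (2 * K * c ^ 2) with (0 + 2 * c * 0 + c ^ 2 * (K - - K)) by ring.
  pose proof (CV_mult _ _ _ _ (Un_cv_const (2 * c)) Hm) as Hcross.
  eapply Un_cv_ext;
    [| exact (CV_plus _ _ _ _ (CV_plus _ _ _ _ L2eq_cst_RInt_sq Hcross)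
                (Un_cv_const (c ^ 2 * (K - - K))))].
  intros n. simpl. pose proof (u_cont n).
  rewrite RI_continuity by solve_continuity.
  unfold m. rewrite <- RInt_Rmult_l, <- RInt_Rconst, <- !RInt_Rplus;
    try apply ex_RInt_continuity; try solve_continuity.
  apply RInt_ext_R. intros x. ring.
Qed.

Lemma AW_L2eq_cst w : 1/2 <= K -> - K <= w <= K -> AW u w = c.
Proof.
  intros HK Hw. unfold AW. apply Rlim_Un_cv.
  set (win := fun n => RInt (fun x => u n x - c) (w - 1/2) (w + 1/2)).
  assert (Hwin : Un_cv win 0).
  { apply (RInt_Un_cv_0_of_sq (fun n x => u n x - c)); [lra | |].
    - intros n. pose proof (u_cont n). solve_continuity.
    - apply (Un_cv_0_squeeze _ (fun n => 3 * RInt (fun x => (u n x - c) ^ 2) (- K) K)).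
      + intros n. pose proof (u_cont n). split.
        * apply RInt_nonneg; [lra | solve_continuity | intros; apply pow2_ge_0].
        * apply RInt_window_le_periodic; [lra | lra | solve_continuity | |].
          -- intros; apply pow2_ge_0.
          -- intros x. rewrite u_per. reflexivity.
      + replace 0 with (3 * 0) by ring.
        exact (CV_mult _ _ _ _ (Un_cv_const 3) L2eq_cst_RInt_sq). }
  replace c with (0 + c * ((w + 1/2) - (w - 1/2))) by field.
  eapply Un_cv_ext; [| exact (CV_plus _ _ _ _ Hwin (Un_cv_const _))].
  intros n. simpl. pose proof (u_cont n) as Hn. rewrite RI_continuity by exact Hn.
  unfold win. rewrite RInt_Rminus, RInt_Rconst;
    try apply ex_RInt_continuity; try solve_continuity.
  ring.
Qed.

End ConstantClass.

Lemma powabs_0 r : powabs 0 r = 0.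
Proof. unfold powabs. destruct Req_EM_T; [reflexivity | contradiction]. Qed.

Lemma powabs_neq0 x r : x <> 0 -> powabs x r = Rpower (Rabs x) r.
Proof. intros Hx. unfold powabs. destruct Req_EM_T; [contradiction | reflexivity]. Qed.

Lemma powabs_ge0 x r : 0 <= powabs x r.
Proof. unfold powabs. destruct Req_EM_T; [lra | left; apply exp_pos]. Qed.

Lemma powabs_gt0 x r : x <> 0 -> 0 < powabs x r.
Proof. intros Hx. rewrite powabs_neq0 by exact Hx. apply exp_pos. Qed.

Lemma powabs_scale t x r : 0 < t -> powabs (t * x) r = Rpower t r * powabs x r.
Proof.
  intros Ht. destruct (Req_dec x 0) as [-> | Hx].
  - rewrite Rmult_0_r, powabs_0. ring.
  - assert (Htx : t * x <> 0) by (apply Rmult_integral_contrapositive; split; lra).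
    rewrite !powabs_neq0, Rabs_mult, (Rabs_right t), Rpower_mult_distr by
      (try apply Rabs_pos_lt; lra).
    reflexivity.
Qed.

Lemma continuity_pt_locally_eq f g x : continuity_pt g x ->
  (exists d, 0 < d /\ forall y, Rabs (y - x) < d -> f y = g y) -> continuity_pt f x.
Proof.
  intros Hg [d [Hd Hfg]] eps Heps.
  destruct (Hg eps Heps) as [a [Ha Hy]]; simpl in *.
  exists (Rmin a d). split; [apply Rmin_pos; lra |].
  intros y [Hdy Hyx]. unfold R_dist in *.
  rewrite (Hfg y), (Hfg x) by (try rewrite Rminus_eq_0, Rabs_R0; pose proof (Rmin_r a d); lra).
  apply Hy. split; [exact Hdy | pose proof (Rmin_l a d); lra].
Qed.

Lemma continuity_powabs r : 0 < r -> continuity (fun x => powabs x r).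
Proof.
  intros Hr x. destruct (Req_dec x 0) as [-> | Hx].
  - intros eps Heps. exists (Rpower eps (/ r)). split; [apply exp_pos |].
    intros y [_ Hy]. simpl in *. unfold R_dist in *.
    rewrite Rminus_0_r in Hy.
    rewrite powabs_0, Rminus_0_r, Rabs_right by apply Rle_ge, powabs_ge0.
    destruct (Req_dec y 0) as [-> | Hy0]; [rewrite powabs_0; lra |].
    rewrite powabs_neq0 by exact Hy0.
    replace eps with (Rpower (Rpower eps (/ r)) r) by
      (rewrite Rpower_mult, Rinv_l, Rpower_1; lra).
    apply Rlt_Rpower_l; [exact Hr |]. split; [apply Rabs_pos_lt |]; assumption.
  - apply continuity_pt_locally_eq with (fun y => Rpower (Rabs y) r).
    + apply (continuity_pt_comp Rabs (fun z => Rpower z r)); [apply Rcontinuity_abs |].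
      apply derivable_continuous_pt. exists (r * Rpower (Rabs x) (r - 1)).
      apply derivable_pt_lim_power, Rabs_pos_lt, Hx.
    + exists (Rabs x). split; [apply Rabs_pos_lt, Hx |].
      intros y Hy. apply powabs_neq0. intros ->.
      rewrite Rminus_0_l, Rabs_Ropp in Hy. lra.
Qed.

Lemma Rpower_2 a : 0 < a -> Rpower a 2 = a ^ 2.
Proof. intros Ha. replace 2 with (INR 2) by (simpl; ring). apply Rpower_pow, Ha. Qed.

Lemma Rpower_split_2 a e : 0 < a -> Rpower a e = Rpower a (e - 2) * a ^ 2.
Proof. intros Ha. rewrite <- Rpower_2, <- Rpower_plus by exact Ha. f_equal. ring. Qed.

Lemma Rpower_Rinv_le x e M : 0 < e -> 0 < M -> Rpower M (/ e) <= x -> M <= Rpower x e.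
Proof.
  intros He HM Hx. rewrite <- (Rpower_1 M) at 1 by exact HM.
  rewrite <- (Rinv_l e), <- Rpower_mult by lra.
  apply Rle_Rpower_l; [lra |]. split; [apply exp_pos | exact Hx].
Qed.

Lemma continuity_pt_Rpower e t : 0 < t -> continuity_pt (fun x => Rpower x e) t.
Proof.
  intros Ht. apply derivable_continuous_pt.
  exists (e * Rpower t (e - 1)). apply derivable_pt_lim_power, Ht.
Qed.

Lemma root_of_sign_change h a b : 0 < a -> 0 < b ->
  (forall t, 0 < t -> continuity_pt h t) -> h a < 0 -> 0 < h b ->
  exists t, 0 < t /\ h t = 0.
Proof.
  intros Ha Hb Hh Hha Hhb.
  destruct (Rtotal_order a b) as [Hab | [-> | Hba]]; [| lra |].
  - destruct (IVT_interv h a b) as [t [Ht Hht]]; auto.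
    + intros t Ht. apply Hh. lra.
    + exists t. split; [lra | exact Hht].
  - destruct (IVT_interv (fun t => - h t) b a) as [t [Ht Hht]]; try lra.
    + intros t Ht. apply continuity_pt_opp, Hh. lra.
    + exists t. split; lra.
Qed.

(* Dividing the Nehari identity by t^2 turns it into [nehari_fiber t = 0]. *)
Definition nehari_fiber (s2 A Bq Bp p q t : R) : R :=
  p * Bp * Rpower t (p - 2) - s2 * A - q * Bq * Rpower t (q - 2).

Section NehariScaling.

Variables (s2 A Bq Bp p q : R).
Hypotheses (hp : 2 < p) (hq : 0 < q) (hqp : q < p)
  (hs : 0 < s2) (hA : 0 < A) (hBq : 0 <= Bq) (hBp : 0 < Bp).

Let h := nehari_fiber s2 A Bq Bp p q.

Lemma nehari_fiber_neg : exists t, 0 < t /\ h t < 0.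
Proof.
  exists (Rpower (s2 * A / (2 * p * Bp)) (/ (p - 2))). split; [apply exp_pos |].
  unfold h, nehari_fiber. rewrite Rpower_mult, Rinv_l, Rpower_1;
    [| apply Rdiv_lt_0_compat; nra | lra].
  assert (0 <= q * Bq * Rpower (Rpower (s2 * A / (2 * p * Bp)) (/ (p - 2))) (q - 2)).
  { apply Rmult_le_pos; [nra | left; apply exp_pos]. }
  assert (p * Bp * (s2 * A / (2 * p * Bp)) = s2 * A / 2) by (field; lra).
  nra.
Qed.

(* For t large, p Bp t^(p-2) beats both s2 A and q Bq t^(q-2) = q Bq t^(p-2) / t^(p-q). *)
Lemma nehari_fiber_pos : exists t, 0 < t /\ 0 < h t.
Proof.
  set (M := 2 * s2 * A / (p * Bp) + 1). set (N := 2 * q * Bq / (p * Bp) + 1).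
  assert (HM : p * Bp * M = 2 * s2 * A + p * Bp) by (unfold M; field; lra).
  assert (HN : p * Bp * N = 2 * q * Bq + p * Bp) by (unfold N; field; lra).
  assert (HM0 : 0 < M) by (unfold M; assert (0 < 2 * s2 * A / (p * Bp)) by
    (apply Rdiv_lt_0_compat; nra); lra).
  assert (HN0 : 0 < N) by (unfold N; assert (0 <= 2 * q * Bq / (p * Bp)) by
    (apply Rmult_le_pos; [nra | left; apply Rinv_0_lt_compat; nra]); lra).
  set (t := Rpower M (/ (p - 2)) + Rpower N (/ (p - q))).
  assert (HM1 : 0 < Rpower M (/ (p - 2))) by apply exp_pos.
  assert (HN1 : 0 < Rpower N (/ (p - q))) by apply exp_pos.
  assert (Ht : 0 < t) by (unfold t; lra).
  assert (HtM : M <= Rpower t (p - 2)) by (apply Rpower_Rinv_le; unfold t; lra).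
  assert (HtN : N <= Rpower t (p - q)) by (apply Rpower_Rinv_le; unfold t; lra).
  assert (Htq : 0 < Rpower t (q - 2)) by apply exp_pos.
  assert (Hsplit : Rpower t (p - 2) = Rpower t (q - 2) * Rpower t (p - q)).
  { rewrite <- Rpower_plus. f_equal. ring. }
  exists t. split; [exact Ht |]. unfold h, nehari_fiber.
  assert (Rpower t (q - 2) * (p * Bp) * (Rpower t (p - q) - N) >= 0).
  { apply Rle_ge, Rmult_le_pos; [apply Rmult_le_pos; [| apply Rmult_le_pos] |]; lra. }
  assert (p * Bp * (Rpower t (p - 2) - M) >= 0)
    by (apply Rle_ge, Rmult_le_pos; [apply Rmult_le_pos |]; lra).
  assert (Rpower t (q - 2) * (p * Bp * N) = Rpower t (q - 2) * (2 * q * Bq + p * Bp))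
    by (rewrite HN; reflexivity).
  assert (0 < Rpower t (q - 2) * (p * Bp)) by (apply Rmult_lt_0_compat; nra).
  rewrite Hsplit in *. nra.
Qed.

Lemma nehari_scaling_exists :
  exists t, 0 < t /\ s2 * (t ^ 2 * A) + q * (Rpower t q * Bq) - p * (Rpower t p * Bp) = 0.
Proof.
  destruct nehari_fiber_neg as [a [Ha Hha]]. destruct nehari_fiber_pos as [b [Hb Hhb]].
  destruct (root_of_sign_change h a b Ha Hb) as [t [Ht Hht]]; auto.
  - intros t Ht. unfold h, nehari_fiber.
    repeat first [ apply continuity_pt_minus | apply continuity_pt_mult
                 | apply continuity_pt_Rpower, Ht
                 | apply continuity_pt_const; intros ? ?; reflexivity ].
  - exists t. split; [exact Ht |].
    rewrite (Rpower_split_2 t q), (Rpower_split_2 t p) by exact Ht.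
    unfold h, nehari_fiber in Hht.
    transitivity (- t ^ 2 * (p * Bp * Rpower t (p - 2) - s2 * A - q * Bq * Rpower t (q - 2))).
    + ring.
    + rewrite Hht. ring.
Qed.

End NehariScaling.

Definition nehari_level (p s2 : R) : R := (1/2 - 1/p) * s2 * Rpower (s2 / p) (2 / (p - 2)).

Lemma nehari_level_pos p s2 : 2 < p -> 0 < s2 -> 0 < nehari_level p s2.
Proof.
  intros hp hs. unfold nehari_level.
  assert (1/p < 1/2) by (apply Rmult_lt_reg_r with (2 * p); [lra | field_simplify; lra]).
  apply Rmult_lt_0_compat; [apply Rmult_lt_0_compat; lra | apply exp_pos].
Qed.

(* On the Nehari manifold p a^p = s2 a^2 + q a^q, so a^(p-2) >= s2/p, and the energy
   per unit length equals (1/2 - 1/p) s2 a^2 + (1 - q/p) a^q. *)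
Lemma nehari_level_le p q s2 a : 2 < p -> 0 < q -> q < p -> 0 < s2 -> 0 < a ->
  s2 * a ^ 2 + q * Rpower a q - p * Rpower a p = 0 ->
  nehari_level p s2 <= 1/2 * s2 * a ^ 2 + Rpower a q - Rpower a p.
Proof.
  intros hp hq hqp hs ha HF. unfold nehari_level.
  assert (Ha2 : 0 < a ^ 2) by (apply pow_lt, ha).
  assert (Haq : 0 < Rpower a q) by apply exp_pos.
  assert (Hap : Rpower a p = (s2 * a ^ 2 + q * Rpower a q) / p).
  { apply Rmult_eq_reg_l with p; [| lra]. field_simplify; lra. }
  assert (Hpow : s2 / p <= Rpower a (p - 2)).
  { apply Rmult_le_reg_r with (p * a ^ 2); [nra |].
    replace (s2 / p * (p * a ^ 2)) with (s2 * a ^ 2) by (field; lra).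
    replace (Rpower a (p - 2) * (p * a ^ 2)) with (p * Rpower a p)
      by (rewrite (Rpower_split_2 a p ha); ring).
    nra. }
  assert (Ha2_ge : Rpower (s2 / p) (2 / (p - 2)) <= a ^ 2).
  { apply Rle_trans with (Rpower (Rpower a (p - 2)) (2 / (p - 2))).
    - apply Rle_Rpower_l; [left; apply Rdiv_lt_0_compat; lra |].
      split; [apply Rdiv_lt_0_compat |]; lra.
    - rewrite Rpower_mult. replace ((p - 2) * (2 / (p - 2))) with 2 by (field; lra).
      rewrite Rpower_2 by exact ha. lra. }
  assert (H12 : 0 <= (1/2 - 1/p) * s2).
  { apply Rmult_le_pos; [| lra].
    assert (1/p < 1/2) by (apply Rmult_lt_reg_r with (2 * p); [lra | field_simplify; lra]). lra. }
  assert (Hq1 : 0 <= (1 - q / p) * Rpower a q).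
  { apply Rmult_le_pos; [| lra].
    assert (q / p < 1) by (apply Rmult_lt_reg_r with p; [lra | field_simplify; lra]). lra. }
  rewrite Hap.
  replace (1/2 * s2 * a ^ 2 + Rpower a q - (s2 * a ^ 2 + q * Rpower a q) / p)
    with ((1/2 - 1/p) * s2 * a ^ 2 + (1 - q / p) * Rpower a q) by (field; lra).
  assert ((1/2 - 1/p) * s2 * Rpower (s2 / p) (2 / (p - 2)) <= (1/2 - 1/p) * s2 * a ^ 2)
    by (apply Rmult_le_compat_l; assumption).
  lra.
Qed.

Definition pos_part (z : R) : R := (z + Rabs z) / 2.

Lemma pos_part_id z : 0 <= z -> pos_part z = z.
Proof. intros Hz. unfold pos_part. rewrite Rabs_right by lra. field. Qed.

Lemma pos_part_eq_0 z : z <= 0 -> pos_part z = 0.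
Proof. intros Hz. unfold pos_part. rewrite Rabs_left1 by lra. field. Qed.

Lemma continuity_pos_part f : continuity f -> continuity (fun y => pos_part (f y)).
Proof.
  intros Hf. unfold pos_part.
  pose proof (continuity_comp f Rabs Hf Rcontinuity_abs). unfold comp in *.
  solve_continuity.
Qed.

Definition tent (x : R) : R := pos_part (1 - Rabs x).

Lemma tent_eq_0 x : 1 <= Rabs x -> tent x = 0.
Proof. intros Hx. apply pos_part_eq_0. lra. Qed.

Lemma tent_gt0 x : Rabs x < 1 -> 0 < tent x.
Proof. intros Hx. unfold tent. rewrite pos_part_id by lra. lra. Qed.

Lemma tent_abs x : tent (Rabs x) = tent x.
Proof. unfold tent. rewrite Rabs_Rabsolu. reflexivity. Qed.

Lemma continuity_tent : continuity tent.
Proof.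
  apply continuity_pos_part.
  pose proof Rcontinuity_abs. solve_continuity.
Qed.

(* [acos (Rmax y (1/2))] for [y <= 1], written with [atan] because Stdlib's [acos] has no
   continuity lemma at [y = 1]. *)
Definition acos_cut (y : R) : R :=
  let m := 1/2 + pos_part (y - 1/2) in atan (sqrt (1 - m ^ 2) / m).

Lemma acos_cut_acos y : 1/2 <= y <= 1 -> acos_cut y = acos y.
Proof.
  intros Hy. unfold acos_cut. rewrite pos_part_id, acos_atan by lra.
  unfold Rsqr. do 3 f_equal; ring.
Qed.

Lemma acos_cut_low y : y <= 1/2 -> acos_cut y = PI / 3.
Proof.
  intros Hy. transitivity (acos_cut (1/2)).
  - unfold acos_cut. rewrite !pos_part_eq_0 by lra. reflexivity.
  - rewrite acos_cut_acos, <- cos_PI3, acos_cos by (pose proof PI_RGT_0; lra). reflexivity.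
Qed.

Lemma continuity_pt_acos_cut y : y <= 1 -> continuity_pt acos_cut y.
Proof.
  intros Hy. unfold acos_cut.
  set (m := fun y => 1/2 + pos_part (y - 1/2)).
  assert (Hm : continuity m) by (apply continuity_plus; [solve_continuity |];
                                 apply continuity_pos_part; solve_continuity).
  assert (Hmy : 1/2 <= m y <= 1).
  { unfold m. destruct (Rle_dec y (1/2)).
    - rewrite pos_part_eq_0; lra.
    - rewrite pos_part_id; lra. }
  apply (continuity_pt_comp (fun y => sqrt (1 - m y ^ 2) / m y) atan);
    [| apply derivable_continuous_pt, derivable_pt_atan].
  apply continuity_pt_div; [| apply Hm | lra].
  apply (continuity_pt_comp (fun y => 1 - m y ^ 2) sqrt).
  - assert (Hc : continuity (fun y => 1 - m y ^ 2)) by solve_continuity. apply Hc.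
  - apply continuity_pt_sqrt. nra.
Qed.

Lemma acos_cut_cos_le t : 0 <= t <= PI / 3 -> acos_cut (cos t) = t.
Proof.
  intros Ht. pose proof PI_RGT_0.
  assert (Hc : 1/2 <= cos t <= 1).
  { split; [| apply COS_bound]. rewrite <- cos_PI3.
    destruct (Req_dec t (PI / 3)) as [-> | Hne]; [lra | left; apply cos_decreasing_1; lra]. }
  rewrite acos_cut_acos, acos_cos by (assumption || lra). reflexivity.
Qed.

Lemma acos_cut_cos_ge t : PI / 3 <= t <= PI -> acos_cut (cos t) = PI / 3.
Proof.
  intros Ht. pose proof PI_RGT_0. apply acos_cut_low. rewrite <- cos_PI3.
  destruct (Req_dec t (PI / 3)) as [-> | Hne]; [lra | left; apply cos_decreasing_1; lra].
Qed.

(* [K/PI * acos (cos (PI x / K))] is the distance from x to 2K Z; cutting [acos] at PI/3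
   is harmless since [tent] vanishes beyond 1 <= K/3. *)
Definition periodic_tent (K x : R) : R := tent (K / PI * acos_cut (cos (PI * x / K))).

Lemma continuity_periodic_tent K : continuity (periodic_tent K).
Proof.
  intros x. unfold periodic_tent.
  apply (continuity_pt_comp (fun x => K / PI * acos_cut (cos (PI * x / K))) tent);
    [| apply continuity_tent].
  apply continuity_pt_mult; [apply continuity_pt_const; intros ? ?; reflexivity |].
  apply (continuity_pt_comp (fun x => cos (PI * x / K)) acos_cut);
    [| apply continuity_pt_acos_cut, COS_bound].
  apply (continuity_pt_comp (fun x => PI * x / K) cos); [| apply continuity_cos].
  assert (Hlin : continuity (fun x => PI * x * / K)) by solve_continuity. apply Hlin.
Qed.

Lemma periodic_tent_periodic K x : 0 < K -> periodic_tent K (x + 2 * K) = periodic_tent K x.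
Proof.
  intros HK. unfold periodic_tent.
  replace (PI * (x + 2 * K) / K) with (PI * x / K + 2 * INR 1 * PI) by (simpl; field; lra).
  rewrite cos_period. reflexivity.
Qed.

Lemma tent_acos_cut_cos K s : 3 <= K -> 0 <= s <= K ->
  tent (K / PI * acos_cut (cos (PI * s / K))) = tent s.
Proof.
  intros HK Hs. pose proof PI_RGT_0 as Hpi.
  assert (Hangle : PI * s / K = PI / K * s) by (field; lra).
  assert (HPIK : 0 < PI / K) by (apply Rdiv_lt_0_compat; lra).
  destruct (Rle_dec s (K / 3)) as [Hle | Hgt].
  - rewrite acos_cut_cos_le.
    + f_equal. field. lra.
    + rewrite Hangle. split; [nra |].
      replace (PI / 3) with (PI / K * (K / 3)) by (field; lra). nra.
  - rewrite acos_cut_cos_ge.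
    + replace (K / PI * (PI / 3)) with (K / 3) by (field; lra).
      rewrite !tent_eq_0; [reflexivity | |]; rewrite Rabs_right; lra.
    + rewrite Hangle. split.
      * replace (PI / 3) with (PI / K * (K / 3)) by (field; lra). nra.
      * replace PI with (PI / K * K) at 2 by (field; lra). nra.
Qed.

Lemma periodic_tent_eq_tent K x : 3 <= K -> Rabs x <= K + 1/2 -> periodic_tent K x = tent x.
Proof.
  intros HK Hx. pose proof PI_RGT_0 as Hpi. unfold periodic_tent.
  assert (Hcos : cos (PI * x / K) = cos (PI * Rabs x / K)).
  { destruct (Rle_dec 0 x); [rewrite Rabs_right by lra; reflexivity |].
    rewrite Rabs_left, <- cos_neg by lra. f_equal. field. lra. }
  rewrite Hcos, <- (tent_abs x). destruct (Rle_dec (Rabs x) K).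
  - apply tent_acos_cut_cos; [exact HK | split; [apply Rabs_pos | exact r]].
  - replace (PI * Rabs x / K) with (2 * PI - PI * (2 * K - Rabs x) / K) by (field; lra).
    rewrite cos_minus, cos_2PI, sin_2PI, Rmult_1_l, Rmult_0_l, Rplus_0_r.
    rewrite tent_acos_cut_cos by lra.
    rewrite !tent_eq_0; [reflexivity | |]; rewrite Rabs_right; lra.
Qed.

Definition window (f : R -> R) (w : R) : R := RInt f (w - 1/2) (w + 1/2).

Lemma continuity_RInt_0 f : continuity f -> continuity (fun z => RInt f 0 z).
Proof.
  intros Hf z. apply continuity_pt_filterlim.
  apply (continuous_RInt_1 (V := R_CompleteNormedModule) f 0 z (fun z => RInt f 0 z)).
  apply filter_forall. intros y.
  apply (RInt_correct (V := R_CompleteNormedModule)), ex_RInt_continuity, Hf.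
Qed.

Lemma continuity_window f : continuity f -> continuity (window f).
Proof.
  intros Hf.
  assert (Hw : window f = fun w => RInt f 0 (w + 1/2) - RInt f 0 (w - 1/2)).
  { apply functional_extensionality. intros w. unfold window.
    rewrite <- (RInt_Chasles_R f 0 (w - 1/2) (w + 1/2) Hf). lra. }
  rewrite Hw. apply (continuity_minus (fun w => RInt f 0 (w + 1/2))).
  - apply (continuity_comp (fun w => w + 1/2) (fun z => RInt f 0 z));
      [solve_continuity | apply continuity_RInt_0, Hf].
  - apply (continuity_comp (fun w => w - 1/2) (fun z => RInt f 0 z));
      [solve_continuity | apply continuity_RInt_0, Hf].
Qed.

Lemma window_tent_eq_0 w : 3/2 <= Rabs w -> window tent w = 0.
Proof.
  intros Hw. apply RInt_eq_0; [lra |]. intros x Hx. apply tent_eq_0.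
  destruct (Rle_dec 0 w).
  - rewrite Rabs_right in Hw by lra. rewrite Rabs_right; lra.
  - rewrite Rabs_left in Hw by lra. rewrite Rabs_left; lra.
Qed.

Lemma window_tent_gt0 w : Rabs w < 1/2 -> 0 < window tent w.
Proof.
  intros Hw. apply Rabs_def2 in Hw. apply RInt_gt_0; [lra | |].
  - intros x Hx. apply tent_gt0, Rabs_def1; lra.
  - intros x _. apply continuity_pt_filterlim, continuity_tent.
Qed.

Lemma window_periodic_tent K w : 3 <= K -> - K <= w <= K ->
  window (periodic_tent K) w = window tent w.
Proof.
  intros HK Hw. apply RInt_ext_le; [lra |].
  intros x Hx. apply periodic_tent_eq_tent; [exact HK | apply Rabs_le; lra].
Qed.

Definition tent_sq_int : R := RInt (fun x => tent x ^ 2) (-1) 1.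

Definition tent_window_int (r : R) : R :=
  RInt (fun w => powabs (window tent w) r) (- (3/2)) (3/2).

Lemma tent_sq_int_pos : 0 < tent_sq_int.
Proof.
  apply RInt_gt_0; [lra | |].
  - intros x Hx. apply pow_lt, tent_gt0, Rabs_def1; lra.
  - intros x _. apply continuity_pt_filterlim.
    pose proof continuity_tent. solve_continuity.
Qed.

Lemma continuity_powabs_window f r : 0 < r -> continuity f ->
  continuity (fun w => powabs (window f w) r).
Proof.
  intros Hr Hf. apply (continuity_comp (window f) (fun x => powabs x r)).
  - apply continuity_window, Hf.
  - apply continuity_powabs, Hr.
Qed.

Lemma tent_window_int_pos r : 0 < r -> 0 < tent_window_int r.
Proof.
  intros Hr. unfold tent_window_int.
  pose proof (continuity_powabs_window tent r Hr continuity_tent) as Hc.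
  rewrite <- (RInt_Chasles_R _ (- (3/2)) (- (1/4)) (3/2) Hc),
          <- (RInt_Chasles_R _ (- (1/4)) (1/4) (3/2) Hc).
  pose proof (RInt_nonneg _ (- (3/2)) (- (1/4)) ltac:(lra) Hc (fun w => powabs_ge0 _ r)).
  pose proof (RInt_nonneg _ (1/4) (3/2) ltac:(lra) Hc (fun w => powabs_ge0 _ r)).
  assert (0 < RInt (fun w => powabs (window tent w) r) (- (1/4)) (1/4)).
  { apply RInt_gt_0; [lra | |].
    - intros w Hw. apply powabs_gt0.
      enough (0 < window tent w) by lra. apply window_tent_gt0, Rabs_def1; lra.
    - intros w _. apply continuity_pt_filterlim, Hc. }
  lra.
Qed.

Definition tent_class (K t : R) : nat -> R -> R := fun _ x => t * periodic_tent K x.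

Lemma continuity_tent_class K t n : continuity (tent_class K t n).
Proof. pose proof (continuity_periodic_tent K). unfold tent_class. solve_continuity. Qed.

Lemma RInt_tent_class_sq K t : 3 <= K ->
  RInt (fun x => (t * periodic_tent K x) ^ 2) (- K) K = t ^ 2 * tent_sq_int.
Proof.
  intros HK. pose proof continuity_tent.
  rewrite (RInt_ext_le _ (fun x => t ^ 2 * tent x ^ 2)); [| lra |].
  - rewrite RInt_Rmult_l by (apply ex_RInt_continuity; solve_continuity).
    unfold tent_sq_int. f_equal. apply RInt_symmetric_support; [lra | solve_continuity |].
    intros x Hx. rewrite tent_eq_0 by exact Hx. ring.
  - intros x Hx. rewrite periodic_tent_eq_tent by (try apply Rabs_le; lra). ring.
Qed.

Lemma norm2sq_tent_class K t : 3 <= K -> norm2sq K (tent_class K t) = t ^ 2 * tent_sq_int.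
Proof.
  intros HK. unfold norm2sq, tent_class. rewrite Rlim_const, RI_continuity.
  - apply RInt_tent_class_sq, HK.
  - apply continuity_sq, (continuity_tent_class K t 0).
Qed.

Lemma AW_tent_class K t w : AW (tent_class K t) w = t * window (periodic_tent K) w.
Proof.
  unfold AW, tent_class. rewrite Rlim_const, RI_continuity by apply (continuity_tent_class K t 0).
  apply RInt_Rmult_l, ex_RInt_continuity, continuity_periodic_tent.
Qed.

Lemma powabs_AW_tent_class K t r : 0 < t ->
  (fun w => powabs (AW (tent_class K t) w) r)
  = (fun w => Rpower t r * powabs (window (periodic_tent K) w) r).
Proof.
  intros Ht. apply functional_extensionality. intros w.
  rewrite AW_tent_class. apply powabs_scale, Ht.
Qed.

Lemma continuity_powabs_AW_tent_class K t r : 0 < t -> 0 < r ->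
  continuity (fun w => powabs (AW (tent_class K t) w) r).
Proof.
  intros Ht Hr. rewrite powabs_AW_tent_class by exact Ht.
  pose proof (continuity_powabs_window _ r Hr (continuity_periodic_tent K)).
  solve_continuity.
Qed.

Lemma Intpow_tent_class K t r : 3 <= K -> 0 < t -> 0 < r ->
  Intpow K r (tent_class K t) = Rpower t r * tent_window_int r.
Proof.
  intros HK Ht Hr. unfold Intpow.
  rewrite RI_continuity by (apply continuity_powabs_AW_tent_class; assumption).
  rewrite powabs_AW_tent_class by exact Ht.
  pose proof (continuity_powabs_window tent r Hr continuity_tent).
  rewrite (RInt_ext_le _ (fun w => Rpower t r * powabs (window tent w) r)); [| lra |].
  - rewrite RInt_Rmult_l by (apply ex_RInt_continuity; assumption).
    unfold tent_window_int. f_equal. apply RInt_symmetric_support; [lra | assumption |].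
    intros w Hw. rewrite window_tent_eq_0 by exact Hw. apply powabs_0.
  - intros w Hw. rewrite window_periodic_tent by lra. reflexivity.
Qed.

Lemma XK_tent_class K t p q : 3 <= K -> 0 < t -> 0 < p -> 0 < q -> XK K p q (tent_class K t).
Proof.
  intros HK Ht Hp Hq. split; [split | split].
  - intros n. split; [apply continuity_tent_class |].
    intros x. unfold tent_class. rewrite periodic_tent_periodic by lra. reflexivity.
  - intros eps Heps. exists 0%nat. intros n m _ _. unfold dist2.
    rewrite (RI_continuity _ _ _ (continuity_sq _ (continuity_minus _ _
      (continuity_tent_class K t n) (continuity_tent_class K t m)))).
    rewrite (RInt_ext_R (fun x => (tent_class K t n x - tent_class K t m x) ^ 2) (fun _ => 0))
      by (intros x; unfold tent_class; ring).
    rewrite RInt_Rconst. lra.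
  - constructor. apply ex_RInt_Reals_0, ex_RInt_continuity.
    apply continuity_powabs_AW_tent_class; assumption.
  - constructor. apply ex_RInt_Reals_0, ex_RInt_continuity.
    apply continuity_powabs_AW_tent_class; assumption.
Qed.

Lemma tent_class_neq0 K t : 3 <= K -> 0 < t -> ~ L2eq K (tent_class K t) (cst_seq 0).
Proof.
  intros HK Ht H.
  assert (Hcst : Un_cv (fun _ => t ^ 2 * tent_sq_int) 0).
  { eapply Un_cv_ext; [| exact H]. intros n. unfold dist2, cst_seq.
    rewrite RI_continuity by (apply continuity_sq; pose proof (continuity_tent_class K t n);
                              solve_continuity).
    rewrite <- (RInt_tent_class_sq K t HK). apply RInt_ext_R. intros x. unfold tent_class. ring. }
  pose proof (UL_sequence _ _ _ Hcst (Un_cv_const _)).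
  pose proof tent_sq_int_pos. assert (0 < t ^ 2) by (apply pow_lt, Ht). nra.
Qed.

Section TentCompetitor.

Variables (K p q sigma t : R).
Hypotheses (HK : 3 <= K) (Ht : 0 < t) (Hp : 0 < p) (Hq : 0 < q).

Lemma LK_tent_class : LK K p q sigma (tent_class K t) =
  1/2 * sigma ^ 2 * (t ^ 2 * tent_sq_int)
  + Rpower t q * tent_window_int q - Rpower t p * tent_window_int p.
Proof. unfold LK, QK, PK. rewrite norm2sq_tent_class, !Intpow_tent_class; auto. Qed.

Lemma MK_tent_class :
  sigma ^ 2 * (t ^ 2 * tent_sq_int) + q * (Rpower t q * tent_window_int q)
    - p * (Rpower t p * tent_window_int p) = 0 ->
  MK K p q sigma (tent_class K t).
Proof.
  intros Hnehari. split; [apply XK_tent_class; auto |]. split; [apply tent_class_neq0; auto |].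
  unfold FK, QK, PK. rewrite norm2sq_tent_class, !Intpow_tent_class; auto.
Qed.

End TentCompetitor.

Lemma Intpow_L2eq_cst K r u c : 1/2 <= K -> L2seq K u -> L2eq K u (cst_seq c) ->
  inhabited (Riemann_integrable (fun phi => powabs (AW u phi) r) (- K) K) ->
  Intpow K r u = 2 * K * powabs c r.
Proof.
  intros HK Hu Huc [pr]. unfold Intpow. rewrite (RI_RiemannInt _ _ _ pr), <- RInt_Reals.
  rewrite (RInt_ext_le _ (fun _ => powabs c r)), RInt_Rconst; [ring | lra |].
  intros x Hx. rewrite (AW_L2eq_cst K c u Hu Huc) by lra. reflexivity.
Qed.

Lemma LK_L2eq_cst_ge K p q sigma u c : 2 < p -> 0 < q -> q < p -> 0 < sigma ^ 2 ->
  1/2 <= K -> MK K p q sigma u -> L2eq K u (cst_seq c) ->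
  2 * K * nehari_level p (sigma ^ 2) <= LK K p q sigma u.
Proof.
  intros hp hq hqp hs HK [[Hu [Hiq Hip]] [Hnz HF]] Huc.
  assert (Hc : c <> 0) by (intros ->; exact (Hnz Huc)).
  unfold FK, LK, QK, PK in *.
  rewrite (norm2sq_L2eq_cst K c u Hu Huc), !(Intpow_L2eq_cst K _ u c), !powabs_neq0 in *
    by (auto; lra).
  rewrite <- (pow2_abs c) in *.
  assert (Hc_nehari :
    sigma ^ 2 * Rabs c ^ 2 + q * Rpower (Rabs c) q - p * Rpower (Rabs c) p = 0).
  { apply Rmult_eq_reg_l with (2 * K); lra. }
  pose proof (nehari_level_le p q (sigma ^ 2) (Rabs c) hp hq hqp hs (Rabs_pos_lt c Hc) Hc_nehari).
  nra.
Qed.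

Theorem corollary12 (p q sigma : R)
  (hp : 2 < p) (hq1 : 1 < q) (hqp : q < p) (hs : 0 < sigma ^ 2) :
  exists K0 : R, forall K : R, 0 < K -> K0 <= K ->
    forall u : nat -> R -> R, minimizer K p q sigma u -> ~ is_constant K u.
Proof.
  destruct (nehari_scaling_exists (sigma ^ 2) tent_sq_int (tent_window_int q)
              (tent_window_int p) p q hp ltac:(lra) hqp hs tent_sq_int_pos
              (Rlt_le _ _ (tent_window_int_pos q ltac:(lra))) (tent_window_int_pos p ltac:(lra)))
    as [t [Ht Hnehari]].
  set (L0 := 1/2 * sigma ^ 2 * (t ^ 2 * tent_sq_int)
             + Rpower t q * tent_window_int q - Rpower t p * tent_window_int p).
  set (alpha := nehari_level p (sigma ^ 2)).
  assert (Halpha : 0 < alpha) by (apply nehari_level_pos; assumption).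
  exists (Rmax 3 (L0 / (2 * alpha) + 1)).
  intros K _ HK u [Hu Hmin] [c Huc].
  pose proof (Rmax_l 3 (L0 / (2 * alpha) + 1)). pose proof (Rmax_r 3 (L0 / (2 * alpha) + 1)).
  assert (HL0 : LK K p q sigma u <= L0).
  { unfold L0. rewrite <- (LK_tent_class K p q sigma t) by lra.
    apply Hmin, MK_tent_class; [lra | lra | lra | lra | exact Hnehari]. }
  pose proof (LK_L2eq_cst_ge K p q sigma u c hp ltac:(lra) hqp hs ltac:(lra) Hu Huc) as Hconst.
  fold alpha in Hconst.
  assert (HKL0 : K <= L0 / (2 * alpha)).
  { apply Rmult_le_reg_l with (2 * alpha); [lra |].
    replace (2 * alpha * (L0 / (2 * alpha))) with L0 by (field; lra). lra. }
  lra.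
Qed.
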